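(* Let $\Sigma$ be a finite set of tuple-generating dependencies (possibly cyclic, possibly with self-joins and constants) over a relational schema, and let $D$ be a finite database instance whose entries are constants and labeled nulls. Suppose a user inserts a tuple (or replaces all occurrences of a labeled null by a constant), and the Youtopia forward chase is then run without any frontier operations, i.e. only deterministic chase steps (as described in the context) are performed. Then the chase, viewed as a tree whose nodes are inserted tuples and whose edges are direct causality relationships, has the property that computation stops along every path after finitely many steps (unless the chase terminates, with all violations repaired, before such a point is reached). In particular, only finitely many tuples are inserted before the chase either terminates or reaches a state in which every pending violation is awaiting a frontier operation.
   Context: A tgd has the form $\Phi(\bar x,\bar y)\rightarrow \exists \bar z\,\Psi(\bar x,\bar z)$, with $\Phi,\Psi$ conjunctions of relational atoms over variables and constants; free variables are universally quantified. A database contains constants and labeled nulls. For a tgd $\sigma$ with free variables $\bar x$, LHS $\sigma_l(\bar x)$ and RHS $\sigma_r(\bar x,\bar y)$, a violation is an assignment $\bar a$ of database values to $\bar x$ with $D\models\sigma_l[\bar x\mapsto\bar a]$ but $D\not\models\sigma_r[\bar x\mapsto \bar a]$; its witness is the set of tuples of $D$ matching the LHS under this assignment. Specificity: a tuple $t=(a_1,\dots,a_k)$ is more specific than $t'=(a'_1,\dots,a'_k)$ (same relation) if the map $f(a'_i)=a_i$ is a well-defined function and $f$ is the identity on constants (values that are not labeled nulls). Forward chase (deterministic part): maintain a queue of violations, initially those created by the user's operation. Repeatedly pick a violation $v$ from the queue that is still present; instantiate the RHS of the violated tgd under the assignment of $v$, using fresh labeled nulls for the existentially quantified variables, yielding generated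 tuples. If for every generated tuple $t$ in relation $R$, $R$ contains no tuple more specific than $t$, insert all generated tuples (a deterministic repair), remove $v$, and append any new violations created by the insertions to the queue. Otherwise the generated tuples are set aside as positive frontier tuples (not inserted), the chase does not pursue that violation further, and it awaits a user frontier operation on it. The chase continues deterministically while some violation in the queue is deterministically repairable. *)

From Stdlib Require List.
From mathcomp Require Import all_boot.
Set Implicit Arguments. Unset Strict Implicit. Unset Printing Implicit Defensive.

(* A database value: [inl c] is the constant c, [inr n] is the labeled null n. *)
Definition value := (nat + nat)%type.
Definition is_null (v : value) : bool := if v is inr _ then true else false.

(* A fact (tuple) of relation [r]: (r, list of values). *)
Definition fact := (nat * seq value)%type.
Definition database := seq fact.

Inductive term := TVar of nat | TEx of nat | TConst of nat.
Definition atom := (nat * seq term)%type.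

(* A tgd  Phi(x) -> exists z, Psi(x, z).  Universal variables are
   TVar 0 .. TVar (nuv-1), existential ones TEx 0 .. TEx (nex-1). *)
Record tgd := Tgd { nuv : nat; nex : nat; lhs : seq atom; rhs : seq atom }.

Definition is_var_i (i : nat) (t : term) : bool :=
  if t is TVar k then k == i else false.

Definition wf_tgd (s : tgd) : bool :=
  [&& all (fun A => all (fun t => match t with
                                  | TVar i => i < nuv s
                                  | TEx _ => false
                                  | TConst _ => true end) A.2) (lhs s),
      all (fun A => all (fun t => match t with
                                  | TVar i => i < nuv s
                                  | TEx j => j < nex s
                                  | TConst _ => true end) A.2) (rhs s)
    & all (fun i => has (fun A => has (is_var_i i) A.2) (lhs s)) (iota 0 (nuv s))].

Definition inst_term (a b : seq value) (t : term) : value :=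
  match t with
  | TVar i => nth (inr 0) a i
  | TEx j => nth (inr 0) b j
  | TConst c => inl c
  end.
Definition inst_atom (a b : seq value) (A : atom) : fact :=
  (A.1, map (inst_term a b) A.2).

(* A violation: index of the tgd in Sigma and assignment of its universal
   (LHS) variables. *)
Definition viol := (nat * seq value)%type.
Definition tgd_of (S : seq tgd) (i : nat) : tgd := nth (Tgd 0 0 [::] [::]) S i.

Definition lhs_holds (D : database) (s : tgd) (a : seq value) : Prop :=
  forall A, List.In A (lhs s) -> inst_atom a [::] A \in D.
Definition rhs_holds (D : database) (s : tgd) (a : seq value) : Prop :=
  exists b : seq value, size b = nex s /\
    forall A, List.In A (rhs s) -> inst_atom a b A \in D.

Definition is_violation (S : seq tgd) (D : database) (v : viol) : Prop :=
  v.1 < size S /\ size v.2 = nuv (tgd_of S v.1) /\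
  lhs_holds D (tgd_of S v.1) v.2 /\ ~ rhs_holds D (tgd_of S v.1) v.2.

Definition more_specific (t t' : fact) : Prop :=
  t.1 = t'.1 /\
  exists f : value -> value, (forall c, f (inl c) = inl c) /\ map f t'.2 = t.2.

Definition null_in_db (n : nat) (D : database) : bool :=
  has (fun f => inr n \in f.2) D.

Definition fresh_nulls (D : database) (k : nat) (b : seq value) : Prop :=
  size b = k /\ all is_null b /\ uniq b /\
  forall n, inr n \in b -> ~~ null_in_db n D.

Definition generated (s : tgd) (a b : seq value) : seq fact :=
  map (inst_atom a b) (rhs s).

Definition det_repairable (D : database) (gen : seq fact) : Prop :=
  forall t, t \in gen -> ~ (exists t0, t0 \in D /\ more_specific t0 t).

Definition new_violations (S : seq tgd) (D D' : database) (L : seq viol) : Prop :=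
  forall w, w \in L <-> (is_violation S D' w /\ ~ is_violation S D w).

Definition state := (database * seq viol)%type.

(* A violation
   picked from the queue is either no longer present (dropped), or repaired
   deterministically, or (when not deterministically repairable) set aside
   awaiting a frontier operation, i.e. no longer pursued by the chase. *)
Inductive chase_step (S : seq tgd) : state -> state -> Prop :=
  | step_stale D Q v :
      v \in Q -> ~ is_violation S D v -> chase_step S (D, Q) (D, rem v Q)
  | step_frontier D Q v b :
      v \in Q -> is_violation S D v ->
      fresh_nulls D (nex (tgd_of S v.1)) b ->
      ~ det_repairable D (generated (tgd_of S v.1) v.2 b) ->
      chase_step S (D, Q) (D, rem v Q)
  | step_repair D Q v b L :
      v \in Q -> is_violation S D v ->
      fresh_nulls D (nex (tgd_of S v.1)) b ->
      det_repairable D (generated (tgd_of S v.1) v.2 b) ->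
      new_violations S D (D ++ generated (tgd_of S v.1) v.2 b) L ->
      chase_step S (D, Q) (D ++ generated (tgd_of S v.1) v.2 b, rem v Q ++ L).

Inductive user_op :=
  | InsertTuple of fact
  | ReplaceNull of nat & nat.

Definition subst_null (n c : nat) (v : value) : value :=
  if v == inr n then inl c else v.

Definition apply_op (op : user_op) (D : database) : database :=
  match op with
  | InsertTuple t => t :: D
  | ReplaceNull n c => map (fun f => (f.1, map (subst_null n c) f.2)) D
  end.

Definition chase_terminates (S : seq tgd) (s : state) : Prop :=
  Acc (fun s' s0 => chase_step S s0 s') s.

From mathcomp Require Import all_boot.
Set Implicit Arguments. Unset Strict Implicit. Unset Printing Implicit Defensive.

(* Let C be the constants of the database right after the user operation and
   the constants occurring in tgd heads.  Every chase step keeps all database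
   constants in C: a well-formed tgd copies into its head only values bound by
   its body (which are in the database), constants of its head, and fresh
   nulls.

   Renaming the nulls of a tuple by the position of their first occurrence
   gives its canonical form; two tuples with the same canonical form are each
   more specific than the other.  The canonical forms of tuples a repair can
   create (head atoms instantiated over constants in C) range over a finite
   list of patterns.  A deterministic repair inserts a tuple whose pattern is
   not yet realised in the database -- otherwise a realising tuple would be
   more specific -- so the number of unrealised patterns strictly decreases.
   Stale and frontier steps keep the database and shorten the queue.  The chase
   therefore terminates by lexicographic well-foundedness of these two measures. *)

(* Bridges between [List.In], used by the definitions for atoms and tgds (which
   have no decidable equality), and boolean membership in MathComp sequences. *)
Section ListMembership.
Variables (X : Type) (Y : eqType).

Lemma In_all (a : pred X) l x : all a l -> List.In x l -> a x.
Proof. by elim: l => //= y l IH /andP[ay al] [<- | /IH]; last exact. Qed.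

Lemma has_In (a : pred X) l : has a l -> exists2 x, List.In x l & a x.
Proof.
elim: l => //= y l IH /orP[ay | /IH[x Hx ax]]; first by exists y; [left|].
by exists x; [right|].
Qed.

Lemma In_mem_map (f : X -> Y) l x : List.In x l -> f x \in map f l.
Proof. by elim: l => //= y l IH [-> | /IH Hx]; rewrite in_cons ?eqxx ?Hx ?orbT. Qed.

Lemma mem_map_In (f : X -> Y) l y :
  y \in map f l -> exists2 x, List.In x l & y = f x.
Proof.
elim: l => //= x l IH; rewrite in_cons => /orP[/eqP-> | /IH[z Hz ->]].
  by exists x; [left|].
by exists z; [right|].
Qed.

Lemma In_flatten_map (f : X -> seq Y) l x y :
  List.In x l -> y \in f x -> y \in flatten (map f l).
Proof.
by elim: l => //= z l IH [-> | /IH Hx] Hy; rewrite mem_cat ?Hy ?Hx ?orbT.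
Qed.

Lemma In_mem_pmap (f : X -> option Y) l x y :
  List.In x l -> f x = Some y -> y \in pmap f l.
Proof.
elim: l => //= z l IH [-> -> | /IH Hx /Hx]; first by rewrite mem_head.
by case: (f z) => //= u; rewrite in_cons => ->; rewrite orbT.
Qed.

Lemma In_nth (d : X) l i : i < size l -> List.In (nth d l i) l.
Proof. by elim: l i => //= x l IH [|i] Hi; [left | right; apply: IH]. Qed.

End ListMembership.

Lemma count_lt_subpred (T : eqType) (a1 a2 : pred T) s x :
  subpred a1 a2 -> x \in s -> a2 x -> ~~ a1 x -> count a1 s < count a2 s.
Proof.
move=> Hsub; elim: s => //= y s IH; rewrite in_cons => /orP[/eqP<- | Hx] H2 H1.
  by rewrite H2 (negbTE H1) add0n add1n ltnS sub_count.
case H1y: (a1 y); first by rewrite (Hsub _ H1y) ltn_add2l IH.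
by rewrite add0n (leq_trans (IH Hx H2 H1)) // leq_addl.
Qed.

Lemma size_rem_lt (T : eqType) (x : T) s : x \in s -> size (rem x s) < size s.
Proof. by move=> Hx; rewrite size_rem // prednK // -has_predT; apply/hasP; exists x. Qed.

Fixpoint words (T : Type) (al : seq T) (n : nat) : seq (seq T) :=
  if n is n'.+1 then [seq x :: w | x <- al, w <- words al n'] else [:: [::]].

Lemma mem_words (T : eqType) (al : seq T) w :
  {subset w <= al} -> w \in words al (size w).
Proof.
elim: w => [|x w IH] /= Hw; first by rewrite mem_seq1.
apply: allpairs_f; first by rewrite Hw ?mem_head.
by apply: IH => y Hy; rewrite Hw // in_cons Hy orbT.
Qed.

Lemma acc_lex (T : Type) (R : T -> T -> Prop) (P : T -> Prop) (f g : T -> nat) :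
  (forall x y, P x -> R x y -> P y /\ (f y < f x \/ f y = f x /\ g y < g x)) ->
  forall x, P x -> Acc (fun y x => R x y) x.
Proof.
move=> Hstep x; have [n] := ubnP (f x); elim: n x => [//|n IHn] x Hfx.
have [m] := ubnP (g x); elim: m x Hfx => [//|m IHm] x Hfx Hgx Px.
constructor=> y Rxy; have [Py [Hf | [Hf Hg]]] := Hstep x y Px Rxy.
  by apply: IHn Py; apply: leq_trans Hf _.
by apply: IHm Py; rewrite ?Hf //; apply: leq_trans Hg _.
Qed.

Definition canon_values (s : seq value) : seq value :=
  map (fun v => if v is inr _ then inr (index v s) else v) s.

Definition canon (t : fact) : fact := (t.1, canon_values t.2).

Lemma size_canon_values s : size (canon_values s) = size s.
Proof. exact: size_map. Qed.

(* Tuples with equal canonical forms are more specific than one another: the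
   map sending each null of t to the value at its first position in t0 works. *)
Lemma canon_more_specific t0 t : canon t0 = canon t -> more_specific t0 t.
Proof.
case: t0 t => r0 s0 [r s] [-> Hc]; split => //=.
exists (fun v => if v is inr _ then nth (inr 0) s0 (index v s) else v); split => //.
have Hsz : size s0 = size s by rewrite -(size_canon_values s0) Hc size_canon_values.
apply: (@eq_from_nth _ (inr 0)); rewrite size_map ?Hsz // => i Hi.
rewrite (nth_map (inr 0)) //.
have := congr1 (fun x => nth (inr 0) x i) Hc.
rewrite /= /canon_values (nth_map (inr 0)) ?Hsz // (nth_map (inr 0)) //.
case E: (nth (inr 0) s i) => [c|n]; case E0: (nth (inr 0) s0 i) => [c0|n0] //=.
by move=> [<-]; rewrite -E0 nth_index // mem_nth // Hsz.
Qed.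

(* A canonical form only contains constants of the tuple and nulls numbered
   below its arity; this bounds canonical forms by a finite alphabet. *)
Lemma canon_values_entries s v :
  v \in canon_values s -> (exists2 c, v = inl c & inl c \in s) \/
                          (exists2 i, v = inr i & i < size s).
Proof.
case/mapP=> w Hw ->; case: w Hw => [c|n] Hw; first by left; exists c.
by right; exists (index (inr n) s); rewrite ?index_mem.
Qed.

Definition value_const (v : value) : option nat := if v is inl c then Some c else None.
Definition term_const (t : term) : option nat := if t is TConst c then Some c else None.

Definition db_consts (D : database) : seq nat :=
  flatten [seq pmap value_const f.2 | f <- D].
Definition tgd_head_consts (s : tgd) : seq nat :=
  flatten [seq pmap term_const A.2 | A <- rhs s].
Definition head_consts (S : seq tgd) : seq nat := flatten (map tgd_head_consts S).

Definition consts_within (C : seq nat) (D : database) : Prop :=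
  forall f, f \in D -> forall c, inl c \in f.2 -> c \in C.

Lemma db_consts_within D : consts_within (db_consts D) D.
Proof.
move=> f Hf c Hc; apply/flatten_mapP; exists f => //.
by rewrite mem_pmap; apply: map_f Hc.
Qed.

Lemma consts_within_catr C D G :
  consts_within C D -> consts_within C G -> consts_within C (D ++ G).
Proof. by move=> HD HG f; rewrite mem_cat => /orP[/HD | /HG]. Qed.

Lemma mem_tgd_head_consts s A c :
  List.In A (rhs s) -> List.In (TConst c) A.2 -> c \in tgd_head_consts s.
Proof.
move=> HA Hc; apply: (In_flatten_map (f := fun A : atom => pmap term_const A.2) HA).
exact: (In_mem_pmap (f := term_const) Hc).
Qed.

(* The tuples generated for a body match of a well-formed tgd, with nulls for its
   existential variables, only contain constants of the database or of the
   head: a universal variable occurs in some body atom, whose instance is in D. *)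
Lemma generated_consts_within C D s a b :
  wf_tgd s -> lhs_holds D s a -> consts_within C D ->
  {subset tgd_head_consts s <= C} -> all is_null b ->
  consts_within C (generated s a b).
Proof.
case/and3P=> _ Hr Hcovered Hl HD Hhead Hb f /mem_map_In[A HA ->] c.
case/mem_map_In=> [[i|j|c']] HT /=.
- have Hi : i < nuv s by have := In_all (In_all Hr HA) HT.
  have := allP Hcovered i; rewrite mem_iota add0n => /(_ Hi) /has_In[A' HA'].
  case/has_In=> [[k|//|//]] HT' /eqP Hki; subst k => Hc.
  by apply: (HD _ (Hl _ HA')); rewrite Hc; apply: (In_mem_map _ HT').
- move=> Hc; have Hj : j < size b.
    by rewrite ltnNge; apply/negP => /(nth_default (inr 0)); rewrite -Hc.
  by have := all_nthP (inr 0) Hb j Hj; rewrite -Hc.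
- by case=> ->; apply: Hhead; apply: mem_tgd_head_consts HA HT.
Qed.

Definition alphabet (C : seq nat) (n : nat) : seq value :=
  map inl C ++ map inr (iota 0 n).

Definition atom_patterns (C : seq nat) (A : atom) : seq fact :=
  [seq (A.1, w) | w <- words (alphabet C (size A.2)) (size A.2)].

Definition patterns (C : seq nat) (S : seq tgd) : seq fact :=
  flatten [seq flatten [seq atom_patterns C A | A <- rhs s] | s <- S].

Lemma canon_mem_patterns C S s A a b :
  List.In s S -> List.In A (rhs s) ->
  (forall c, inl c \in (inst_atom a b A).2 -> c \in C) ->
  canon (inst_atom a b A) \in patterns C S.
Proof.
move=> Hs HA HC.
apply: (In_flatten_map (f := fun s => flatten [seq atom_patterns C A | A <- rhs s]) Hs).
apply: (In_flatten_map (f := atom_patterns C) HA); apply: map_f.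
have <- : size (canon_values (inst_atom a b A).2) = size A.2.
  by rewrite size_canon_values size_map.
apply: mem_words => v /canon_values_entries[[c -> Hc] | [i -> Hi]].
  by rewrite /alphabet mem_cat map_f ?HC.
by rewrite /alphabet mem_cat orbC map_f // mem_iota add0n size_canon_values.
Qed.

Definition unrealised (C : seq nat) (S : seq tgd) (D : database) : nat :=
  count (fun p => p \notin map canon D) (patterns C S).

Lemma unrealised_cat C S D G t :
  t \in G -> canon t \in patterns C S -> canon t \notin map canon D ->
  unrealised C S (D ++ G) < unrealised C S D.
Proof.
move=> Ht Hpat Hnew; apply: (count_lt_subpred _ Hpat Hnew).
  by move=> p /=; rewrite map_cat mem_cat negb_or => /andP[].
by rewrite negbK map_f // mem_cat Ht orbT.
Qed.

Lemma head_consts_of_tgd S s :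
  List.In s S -> {subset tgd_head_consts s <= head_consts S}.
Proof. by move=> Hs c; apply: (In_flatten_map (f := tgd_head_consts) Hs). Qed.

(* A deterministic repair preserves the constants invariant and realises a new
   pattern: the instance of the first head atom (there is one, as the RHS is
   violated) has no more specific tuple in D, hence no tuple of D shares its
   canonical form. *)
Lemma repair_progress C S D v b :
  all wf_tgd S -> {subset head_consts S <= C} -> consts_within C D ->
  is_violation S D v -> fresh_nulls D (nex (tgd_of S v.1)) b ->
  det_repairable D (generated (tgd_of S v.1) v.2 b) ->
  let D' := D ++ generated (tgd_of S v.1) v.2 b in
  consts_within C D' /\ unrealised C S D' < unrealised C S D.
Proof.
move=> HwfS Hhead HD [Hlt [_ [Hl Hnr]]] [_ [Hb _]] Hdet D'.
set s := tgd_of S v.1 in Hl Hnr Hdet D' *.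
have Hs : List.In s S by apply: In_nth.
have HG : consts_within C (generated s v.2 b).
  apply: generated_consts_within Hl HD _ Hb; first exact: In_all HwfS Hs.
  by move=> c /(head_consts_of_tgd Hs) /Hhead.
split; first exact: consts_within_catr.
case Erhs: (rhs s) => [|A rest].
  by case: Hnr; exists (nseq (nex s) (inr 0)); rewrite size_nseq Erhs.
set t := inst_atom v.2 b A.
have Ht : t \in generated s v.2 b by rewrite /generated Erhs mem_head.
apply: (unrealised_cat Ht).
  by apply: (canon_mem_patterns Hs) (HG t Ht); rewrite Erhs; left.
apply/mapP=> -[t0 Ht0 Hcanon]; apply: (Hdet t Ht); exists t0.
by split=> //; apply: canon_more_specific.
Qed.

Lemma chase_step_progress C S x y :
  all wf_tgd S -> {subset head_consts S <= C} -> consts_within C x.1 ->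
  chase_step S x y ->
  consts_within C y.1 /\
  (unrealised C S y.1 < unrealised C S x.1 \/
   unrealised C S y.1 = unrealised C S x.1 /\ size y.2 < size x.2).
Proof.
move=> HwfS Hhead HD Hstep; case: x y / Hstep HD
  => [D Q v Hv _ | D Q v b Hv _ _ _ | D Q v b L _ Hviol Hfresh Hdet _] HD.
- by split=> //; right; split=> //; apply: size_rem_lt.
- by split=> //; right; split=> //; apply: size_rem_lt.
- by have [HD' Hlt] := repair_progress HwfS Hhead HD Hviol Hfresh Hdet; split=> //; left.
Qed.

Theorem lemma1 (S : seq tgd) (D : database) (op : user_op) (Q0 : seq viol) :
  all wf_tgd S ->
  new_violations S D (apply_op op D) Q0 ->
  chase_terminates S (apply_op op D, Q0).
Proof.
move=> HwfS _; set D0 := apply_op op D.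
pose C := db_consts D0 ++ head_consts S.
have HD0 : consts_within C D0.
  by move=> f Hf c Hc; rewrite mem_cat (db_consts_within Hf Hc).
have Hhead : {subset head_consts S <= C} by move=> c Hc; rewrite mem_cat Hc orbT.
apply: (@acc_lex _ (chase_step S) (fun x => consts_within C x.1)
          (fun x => unrealised C S x.1) (fun x => size x.2) _ (D0, Q0) HD0).
by move=> x y; apply: chase_step_progress.
Qed.
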